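(* Let $K=2L$ with $L\ge1$ an integer, let $N\ge1$ be divisible by $L$, put $M=N/L$, and let $\alpha\in[0,2]$. Let $\sigma$ be the mixed strategy of $\mathcal{B}_\alpha(N,K)$ that randomizes uniformly over the $M+1$ pure strategies $(j,\,M-j,\,j,\,M-j,\,\ldots,\,j,\,M-j)'$, $j=0,1,\ldots,M$. Then $\sigma$ is a symmetric equilibrium strategy of $\mathcal{B}_\alpha(N,K)$. (In particular, in $\mathcal{B}_\alpha(6,4)$, uniform randomization over $(0,3,0,3)',(1,2,1,2)',(2,1,2,1)',(3,0,3,0)'$ is a symmetric equilibrium strategy.)
   Context: Fix integers $N\ge1$, $K\ge2$ and a real number $\alpha$. The Colonel Blotto game $\mathcal{B}_\alpha(N,K)$ is the two-player simultaneous-move game with players $A,B$, each with pure strategy set $S=\{s\in\{0,1,\ldots,N\}^K:\sum_{k=1}^K s_k=N\}$, in which the payoff of player $i$ at the pure profile $(s^i,s^{-i})$ is $\pi^i(s^i,s^{-i})=\sum_{k=1}^K\big(\mathbf 1[s^i_k>s^{-i}_k]+\tfrac{\alpha}{2}\mathbf 1[s^i_k=s^{-i}_k]\big)$. Mixed strategies are probability distributions on $S$, with expected payoffs under independent randomization. A symmetric equilibrium strategy is a mixed strategy $\sigma$ such that $(\sigma,\sigma)$ is a Nash equilibrium. *)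

From HB Require Import structures.
From mathcomp Require Import all_boot all_order all_algebra.
Set Implicit Arguments. Unset Strict Implicit. Unset Printing Implicit Defensive.
Import Order.TTheory GRing.Theory Num.Theory.
Local Open Scope ring_scope.

(* Candidate pure strategies: allocations s : 'I_K -> {0..N}; the genuine
   pure strategy set S of B_alpha(N,K) is those with sum_k s_k = N. *)
Definition alloc (N K : nat) := {ffun 'I_K -> 'I_N.+1}.

Definition is_pure (N K : nat) (s : alloc N K) : bool :=
  (\sum_(k < K) (s k : nat))%N == N.

Definition payoff (R : realFieldType) (N K : nat) (alpha : R)
    (si sj : alloc N K) : R :=
  \sum_(k < K) (((sj k < si k)%N)%:R + alpha / 2%:R * ((si k : nat) == sj k)%:R).

Definition is_mixed (R : realFieldType) (N K : nat) (sigma : alloc N K -> R) : Prop :=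
  (forall s, 0 <= sigma s) /\
  (forall s, ~~ is_pure s -> sigma s = 0) /\
  \sum_(s : alloc N K) sigma s = 1.

Definition exp_payoff (R : realFieldType) (N K : nat) (alpha : R)
    (sigma tau : alloc N K -> R) : R :=
  \sum_(s : alloc N K) \sum_(t : alloc N K) sigma s * tau t * payoff alpha s t.

Definition nash_eq (R : realFieldType) (N K : nat) (alpha : R)
    (sA sB : alloc N K -> R) : Prop :=
  is_mixed sA /\ is_mixed sB /\
  (forall tau, is_mixed tau -> exp_payoff alpha tau sB <= exp_payoff alpha sA sB) /\
  (forall tau, is_mixed tau -> exp_payoff alpha tau sA <= exp_payoff alpha sB sA).

Definition symmetric_equilibrium (R : realFieldType) (N K : nat) (alpha : R)
    (sigma : alloc N K -> R) : Prop := nash_eq alpha sigma sigma.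

(* The pure strategy (j, M-j, j, M-j, ...) (battlefields indexed from 0). *)
Definition alt_strat (N K M j : nat) : alloc N K :=
  [ffun k : 'I_K => inord (if odd k then M - j else j)%N].

Definition alt_mixed (R : realFieldType) (N K M : nat) (s : alloc N K) : R :=
  if [exists j : 'I_M.+1, s == alt_strat N K M j] then (M.+1%:R)^-1 else 0.

From HB Require Import structures.
From mathcomp Require Import all_boot all_order all_algebra.
Import Order.TTheory GRing.Theory Num.Theory.
Local Open Scope ring_scope.
Set Implicit Arguments. Unset Strict Implicit. Unset Printing Implicit Defensive.

(* Write c = alpha/2. If the opponent's allocation on one battlefield is
   uniform on {0..M}, an allocation x there scores
   min(x, M+1) + c [x <= M] <= x + c out of M+1, with equality when x <= M.
   Under sigma the opponent's allocation on every battlefield is uniform on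
   {0..M} (on odd battlefields via j |-> M - j), so by summing over the
   battlefields every pure strategy earns at most (N + cK)/(M+1) against
   sigma, and the strategies in the support of sigma, having all entries at
   most M, earn exactly that. A mixed strategy indifferent on its support
   and optimal among pure strategies is a symmetric equilibrium. *)

Section IndifferenceCriterion.
Variables (R : realFieldType) (N K : nat) (alpha : R).

Definition payoff_against (sigma : alloc N K -> R) (s : alloc N K) : R :=
  \sum_t sigma t * payoff alpha s t.

Lemma exp_payoffE (tau sigma : alloc N K -> R) :
  exp_payoff alpha tau sigma = \sum_s tau s * payoff_against sigma s.
Proof.
apply: eq_bigr => s _; rewrite /payoff_against mulr_sumr.
by apply: eq_bigr => t _; rewrite mulrA.
Qed.

Lemma exp_payoff_le (tau sigma : alloc N K -> R) (v : R) :
  is_mixed tau -> (forall s, is_pure s -> payoff_against sigma s <= v) ->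
  exp_payoff alpha tau sigma <= v.
Proof.
case=> tau_ge0 [tau_pure tau1] le_v.
rewrite exp_payoffE -[v]mul1r -tau1 mulr_suml; apply: ler_sum => s _.
have [/le_v|/tau_pure->] := boolP (is_pure s); last by rewrite !mul0r.
exact: ler_wpM2l.
Qed.

Lemma symmetric_equilibrium_of_indifference (sigma : alloc N K -> R) (v : R) :
  is_mixed sigma ->
  (forall s, is_pure s -> payoff_against sigma s <= v) ->
  (forall s, sigma s != 0 -> payoff_against sigma s = v) ->
  symmetric_equilibrium alpha sigma.
Proof.
move=> sigma_mixed le_v eq_v.
have value : exp_payoff alpha sigma sigma = v.
  case: (sigma_mixed) => _ [_ sigma1].
  rewrite exp_payoffE -[v]mul1r -sigma1 mulr_suml; apply: eq_bigr => s _.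
  by have [->|/eq_v->] := eqVneq (sigma s) 0; rewrite ?mul0r.
do 2!split=> //.
by split=> tau /exp_payoff_le/(_ le_v); rewrite value.
Qed.

End IndifferenceCriterion.

Section FieldScore.
Variables (R : realFieldType) (c : R).

Definition field_score (x y : nat) : R := ((y < x)%N)%:R + c * ((x == y)%N)%:R.

Lemma sum_field_score_ord (x n : nat) :
  \sum_(y < n) field_score x y = (minn x n)%:R + (if (x < n)%N then c else 0).
Proof.
elim: n => [|n IHn]; first by rewrite big_ord0 minn0 ltn0 addr0.
rewrite big_ord_recr /= IHn /field_score.
case: (ltngtP x n) => [x_lt_n|n_lt_x|->].
- by rewrite (minn_idPl (leqW (ltnW x_lt_n))) ltnS (ltnW x_lt_n) mulr0 !addr0.
- by rewrite (minn_idPr n_lt_x) ltnNge n_lt_x mulr0 !addr0 natr1.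
- by rewrite ltnSn (minn_idPl (leqnSn n)) mulr1 !(addr0, add0r).
Qed.

Lemma sum_field_score_le (x n : nat) :
  0 <= c -> \sum_(y < n) field_score x y <= x%:R + c.
Proof.
move=> c_ge0; rewrite sum_field_score_ord lerD ?ler_nat ?geq_minl //.
by case: ifP.
Qed.

Lemma sum_field_score_eq (x n : nat) :
  (x < n)%N -> \sum_(y < n) field_score x y = x%:R + c.
Proof. by move=> x_lt_n; rewrite sum_field_score_ord x_lt_n (minn_idPl (ltnW x_lt_n)). Qed.

End FieldScore.

Lemma payoffE (R : realFieldType) (N K : nat) (alpha : R) (s t : alloc N K) :
  payoff alpha s t = \sum_(k < K) field_score (alpha / 2%:R) (s k) (t k).
Proof. by []. Qed.

Lemma sum_alternating (a b L : nat) :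
  (\sum_(k < 2 * L) (if odd k then a else b))%N = (L * (a + b))%N.
Proof.
elim: L => [|L IHL]; first by rewrite muln0 big_ord0.
have -> : (2 * L.+1 = (2 * L).+2)%N by rewrite mulnS.
rewrite !big_ord_recr /= IHL mul2n odd_double /=.
by rewrite -addnA (addnC b a) addnC mulSn.
Qed.

Section AlternatingStrategies.
Variables (N K M : nat).
Hypothesis leMN : (M <= N)%N.

Lemma alt_stratE (j : 'I_M.+1) (k : 'I_K) :
  alt_strat N K M j k = (if odd k then M - j else j)%N :> nat.
Proof.
have le_jM : (j <= M)%N by rewrite -ltnS.
rewrite ffunE inordK // ltnS; case: ifP => _; apply: leq_trans leMN => //.
exact: leq_subr.
Qed.

Lemma alt_strat_le (j : 'I_M.+1) (k : 'I_K) : (alt_strat N K M j k <= M)%N.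
Proof. by rewrite alt_stratE; case: ifP => _; [exact: leq_subr | rewrite -ltnS]. Qed.

Lemma alt_strat_inj : (0 < K)%N -> injective (fun j : 'I_M.+1 => alt_strat N K M j).
Proof.
move=> K_gt0 i j /(congr1 (fun s : alloc N K => (s (Ordinal K_gt0) : nat))).
by rewrite !alt_stratE /= => /val_inj.
Qed.

Lemma sum_alt_mixed (R : realFieldType) (F : alloc N K -> R) : (0 < K)%N ->
  \sum_t @alt_mixed R N K M t * F t =
  (M.+1%:R)^-1 * \sum_(j < M.+1) F (alt_strat N K M j).
Proof.
move=> K_gt0; set alt := [set alt_strat N K M j | j : 'I_M.+1].
have -> : \sum_t @alt_mixed R N K M t * F t = \sum_(t in alt) (M.+1%:R)^-1 * F t.
  rewrite [RHS]big_mkcond; apply: eq_bigr => t _; rewrite /alt_mixed.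
  have -> : [exists j : 'I_M.+1, t == alt_strat N K M j] = (t \in alt).
    by apply/existsP/imsetP => [[j /eqP->]|[j _ ->]]; exists j.
  by case: ifP; rewrite ?mul0r.
by rewrite -mulr_sumr big_imset //= => i j _ _; apply: alt_strat_inj.
Qed.

Lemma alt_mixed_support (R : realFieldType) (s : alloc N K) :
  @alt_mixed R N K M s != 0 -> exists j : 'I_M.+1, s = alt_strat N K M j.
Proof. by rewrite /alt_mixed; case: existsP => [[j /eqP->] _|_]; [exists j | rewrite eqxx]. Qed.

Lemma alt_mixed_is_mixed (R : realFieldType) : (0 < K)%N ->
  (forall j : 'I_M.+1, is_pure (alt_strat N K M j)) ->
  is_mixed (@alt_mixed R N K M).
Proof.
move=> K_gt0 alt_pure; split.
  by move=> s; rewrite /alt_mixed; case: ifP; rewrite ?invr_ge0.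
split.
  move=> s s_impure; apply/eqP; apply: contraNT s_impure.
  by case/alt_mixed_support=> j ->.
under eq_bigr => t _ do rewrite -[@alt_mixed R N K M t]mulr1.
by rewrite sum_alt_mixed // sumr_const card_ord mulVf // pnatr_eq0.
Qed.

Lemma sum_field_score_alt (R : realFieldType) (c : R) (x : nat) (k : 'I_K) :
  \sum_(j < M.+1) field_score c x (alt_strat N K M j k) =
  \sum_(y < M.+1) field_score c x y.
Proof.
under eq_bigr => j _ do rewrite alt_stratE.
case: (odd k) => //; rewrite -(big_mkord xpredT (fun y => field_score c x (M - y)%N)).
rewrite big_rev_mkord subn0.
by apply: eq_bigr => y _; rewrite subSS subKn // -ltnS.
Qed.

Lemma sum_payoff_alt (R : realFieldType) (alpha : R) (s : alloc N K) :
  \sum_(j < M.+1) payoff alpha s (alt_strat N K M j) =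
  \sum_(k < K) \sum_(y < M.+1) field_score (alpha / 2%:R) (s k) y.
Proof.
under eq_bigr => j _ do rewrite payoffE.
by rewrite exchange_big; apply: eq_bigr => k _; apply: sum_field_score_alt.
Qed.

Lemma sum_payoff_alt_le (R : realFieldType) (alpha : R) (s : alloc N K) :
  0 <= alpha ->
  \sum_(j < M.+1) payoff alpha s (alt_strat N K M j) <=
  (\sum_(k < K) (s k : nat))%:R + alpha / 2%:R *+ K.
Proof.
move=> alpha_ge0; rewrite sum_payoff_alt natr_sum.
rewrite -[in _ *+ K](card_ord K) -sumr_const -big_split; apply: ler_sum => k _.
by apply: sum_field_score_le; rewrite divr_ge0.
Qed.

Lemma sum_payoff_alt_eq (R : realFieldType) (alpha : R) (s : alloc N K) :
  (forall k, s k <= M)%N ->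
  \sum_(j < M.+1) payoff alpha s (alt_strat N K M j) =
  (\sum_(k < K) (s k : nat))%:R + alpha / 2%:R *+ K.
Proof.
move=> s_le; rewrite sum_payoff_alt natr_sum.
rewrite -[in _ *+ K](card_ord K) -sumr_const -big_split; apply: eq_bigr => k _.
by rewrite sum_field_score_eq // ltnS.
Qed.

End AlternatingStrategies.

Lemma alt_strat_pure (L M N : nat) (j : 'I_M.+1) :
  (0 < L)%N -> (L * M = N)%N -> is_pure (alt_strat N (2 * L) M j).
Proof.
move=> L_gt0 LM; have le_jM : (j <= M)%N by rewrite -ltnS.
have leMN : (M <= N)%N by rewrite -LM leq_pmull.
rewrite /is_pure (eq_bigr _ (fun k _ => alt_stratE leMN j k)).
by rewrite sum_alternating subnK ?LM.
Qed.

Theorem mainTheorem11 (R : realFieldType) (L N : nat) (alpha : R) :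
  (1 <= L)%N -> (1 <= N)%N -> (L %| N)%N -> 0 <= alpha <= 2%:R ->
  @symmetric_equilibrium R N (2 * L)%N alpha (@alt_mixed R N (2 * L)%N (N %/ L)%N).
Proof.
move=> L_gt0 _ L_dvd_N /andP[alpha_ge0 _].
set M := (N %/ L)%N; set K := (2 * L)%N.
have LM : (L * M = N)%N by rewrite mulnC divnK.
have leMN : (M <= N)%N by apply: leq_div.
have K_gt0 : (0 < K)%N by rewrite muln_gt0.
have alt_pure (j : 'I_M.+1) : is_pure (alt_strat N K M j) by apply: alt_strat_pure.
apply: (@symmetric_equilibrium_of_indifference _ _ _ _ _
          ((M.+1%:R)^-1 * (N%:R + alpha / 2%:R *+ K))).
- exact: alt_mixed_is_mixed.
- move=> s /eqP s_pure; rewrite /payoff_against sum_alt_mixed //.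
  by rewrite ler_wpM2l ?invr_ge0 // -[in X in _ <= X]s_pure sum_payoff_alt_le.
- move=> _ /alt_mixed_support[j ->]; rewrite /payoff_against sum_alt_mixed //.
  by rewrite sum_payoff_alt_eq ?(eqP (alt_pure j)) // => k; apply: alt_strat_le.
Qed.
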